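(* Let $R$ be a commutative noetherian ring and $A$ a finite $R$-algebra. Let $I,J$ be indecomposable injective $A$-modules with $\mathrm{Hom}_A(I,J)\neq0$ and $\alpha(I)\neq\alpha(J)$. Then $\mathrm{Hom}_A(I,J)$ is not noetherian as a left $\mathrm{End}_A(J)$-module.
   Context: A finite $R$-algebra is a ring $A$ with an injective ring map $R\to Z(A)$ making $A$ a finitely generated $R$-module. For an indecomposable injective $A$-module $I$ there is a unique prime ideal $P$ of $A$ such that $E_A(A/P)$ is a finite direct sum of copies of $I$; $\alpha(I):=P\cap R\in\mathrm{Spec}(R)$. $\mathrm{End}_A(J)$ acts on $\mathrm{Hom}_A(I,J)$ by composition on the left. *)

From HB Require Import structures.
From mathcomp Require Import all_boot all_order all_algebra.
Set Implicit Arguments. Unset Strict Implicit. Unset Printing Implicit Defensive.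
Import GRing.Theory.
Local Open Scope ring_scope.

Definition is_linear_map (A : nzRingType) (M N : lmodType A) (f : M -> N) : Prop :=
  forall (a : A) (x y : M), f (a *: x + y) = a *: f x + f y.

Definition is_submodule (A : nzRingType) (M : lmodType A) (U : M -> Prop) : Prop :=
  [/\ U 0, (forall x y, U x -> U y -> U (x + y)) & (forall (a : A) x, U x -> U (a *: x))].

Definition is_ideal (A : nzRingType) (P : A -> Prop) : Prop :=
  [/\ P 0, (forall x y, P x -> P y -> P (x + y)),
      (forall a x, P x -> P (a * x)) & (forall a x, P x -> P (x * a))].

Definition is_prime_ideal (A : nzRingType) (P : A -> Prop) : Prop :=
  [/\ is_ideal P, ~ P 1 &
      forall a b : A, (forall r : A, P (a * r * b)) -> P a \/ P b].

Definition noetherian_ring (R : comNzRingType) : Prop :=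
  forall c : nat -> R -> Prop,
    (forall n, is_ideal (c n)) ->
    (forall n x, c n x -> c n.+1 x) ->
    exists N, forall n, (N <= n)%N -> forall x, c n x -> c N x.

Definition finite_algebra (R : comNzRingType) (A : nzRingType)
  (phi : {rmorphism R -> A}) : Prop :=
  [/\ injective phi,
      (forall (r : R) (a : A), phi r * a = a * phi r) &
      exists s : seq A, forall a : A, exists c : seq R,
        a = \sum_(i < size s) phi c`_i * s`_i].

Definition injective_module (A : nzRingType) (E : lmodType A) : Prop :=
  forall (M N : lmodType A) (i : M -> N) (g : M -> E),
    is_linear_map i -> injective i -> is_linear_map g ->
    exists h : N -> E, is_linear_map h /\ forall m, h (i m) = g m.

Definition indecomposable_injective (A : nzRingType) (E : lmodType A) : Prop :=
  [/\ injective_module E, (exists x : E, x != 0) &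
      forall U V : E -> Prop, is_submodule U -> is_submodule V ->
        (forall x, U x -> V x -> x = 0) ->
        (forall z, exists u v, [/\ U u, V v & z = u + v]) ->
        (forall x, U x -> x = 0) \/ (forall x, V x -> x = 0)].

(* E is an injective hull of the left module A/P (P a two-sided ideal):
   E is injective and contains an element x with left annihilator exactly P
   (so that a + P |-> a *: x is an embedding A/P -> E with image A x), and
   the image A x is essential in E. *)
Definition injective_hull_of_quotient (A : nzRingType) (P : A -> Prop)
  (E : lmodType A) : Prop :=
  injective_module E /\
  exists x : E,
    (forall a : A, a *: x = 0 <-> P a) /\
    (forall U : E -> Prop, is_submodule U -> (exists y, U y /\ y <> 0) ->
       exists y, [/\ U y, y <> 0 & exists a : A, y = a *: x]).

(* E_A(A/P) is (isomorphic to) a finite direct sum I^n of copies of I. *)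
Definition hull_is_power (A : nzRingType) (P : A -> Prop) (I : lmodType A) : Prop :=
  exists n : nat, injective_hull_of_quotient P {ffun 'I_n -> I}.

(* Hom_A(I,J) is noetherian as a left End_A(J)-module (End_A(J) acting by
   composition on the left): ACC on End_A(J)-submodules of Hom_A(I,J). *)
Definition is_End_submodule (A : nzRingType) (I J : lmodType A)
  (S : (I -> J) -> Prop) : Prop :=
  [/\ forall f, S f -> is_linear_map f,
      S (fun _ => 0),
      (forall f g, S f -> S g -> S (fun x => f x + g x)) &
      (forall (e : J -> J) f, is_linear_map e -> S f -> S (fun x => e (f x)))].

Definition Hom_noetherian_over_End (A : nzRingType) (I J : lmodType A) : Prop :=
  forall c : nat -> (I -> J) -> Prop,
    (forall n, is_End_submodule (c n)) ->
    (forall n f, c n f -> c n.+1 f) ->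
    exists N, forall n, (N <= n)%N -> forall f, c n f -> c N f.

(* Choose r in R lying in exactly one of alpha(I) and alpha(J).  Since
   E(A/P) = I^n contains an element with annihilator exactly P, and A/P is an
   essential submodule with P prime, multiplication by r on I has a nonzero
   kernel if r is in P and is injective otherwise; likewise for J and Q.
   Indecomposable injective modules are uniform, their injective endomorphisms
   are automorphisms, and over the noetherian finite R-algebra A an element of
   R with nonzero kernel on such a module is locally nilpotent on it.
   If r lies in P but not in Q, r is locally nilpotent on I and injective on J,
   so Hom(I, J) = 0.  If r lies in Q but not in P, r has an inverse h on I and
   the End(J)-submodules generated by the f h^n ascend.  Were they to
   stabilize, f h^(n+1) = e (r f h^(n+1)) for some e in End(J), so e r would
   fix a nonzero element of J while killing its nonzero r-torsion, against
   uniformity. *)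

From HB Require Import structures.
From mathcomp Require Import all_boot all_order all_algebra.
From mathcomp Require Import boolp classical_sets.
Set Implicit Arguments. Unset Strict Implicit. Unset Printing Implicit Defensive.
Import GRing.Theory.
Local Open Scope ring_scope.
Local Open Scope classical_set_scope.

Section Submodule.
Variables (A : nzRingType) (M : lmodType A) (S : set M).
Hypothesis S_sub : is_submodule S.

Lemma submod0 : S 0.
Proof. by case: S_sub. Qed.

Lemma submodD x y : S x -> S y -> S (x + y).
Proof. by case: S_sub => _ SD _; apply: SD. Qed.

Lemma submodZ a x : S x -> S (a *: x).
Proof. by case: S_sub => _ _ SZ; apply: SZ. Qed.

Lemma submodN x : S x -> S (- x).
Proof. by rewrite -scaleN1r; apply: submodZ. Qed.

End Submodule.

Section LinearMap.
Variables (A : nzRingType) (M N : lmodType A) (f : M -> N).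
Hypothesis f_lin : is_linear_map f.

Lemma linmapD x y : f (x + y) = f x + f y.
Proof. by rewrite -[x in LHS]scale1r f_lin scale1r. Qed.

Lemma linmap0 : f 0 = 0.
Proof. by apply: (addIr (f 0)); rewrite -linmapD !add0r. Qed.

Lemma linmapZ a x : f (a *: x) = a *: f x.
Proof. by rewrite -[a *: x]addr0 f_lin linmap0 addr0. Qed.

Lemma linmapB x y : f (x - y) = f x - f y.
Proof. by apply: (addIr (f y)); rewrite -linmapD !subrK. Qed.

Lemma linmap_inj : (forall x, f x = 0 -> x = 0) -> injective f.
Proof.
move=> ker0 x y fxy; apply/eqP; rewrite -subr_eq0; apply/eqP/ker0.
by rewrite linmapB fxy subrr.
Qed.

Lemma kernel_submodule : is_submodule (fun x => f x = 0).
Proof.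
split; first exact: linmap0.
- by move=> x y fx fy; rewrite linmapD fx fy addr0.
- by move=> a x fx; rewrite linmapZ fx scaler0.
Qed.

Lemma image_submodule : is_submodule (range f).
Proof.
split; first by exists 0; rewrite ?linmap0.
- by move=> _ _ [x _ <-] [y _ <-]; exists (x + y); rewrite ?linmapD.
- by move=> a _ [x _ <-]; exists (a *: x); rewrite ?linmapZ.
Qed.

End LinearMap.

Lemma fixed_submodule (A : nzRingType) (M : lmodType A) (k : M -> M) :
  is_linear_map k -> is_submodule (fun x => k x = x).
Proof.
move=> k_lin; split; first exact: linmap0.
- by move=> x y kx ky; rewrite (linmapD k_lin) kx ky.
- by move=> a x kx; rewrite (linmapZ k_lin) kx.
Qed.

Lemma linmap_id (A : nzRingType) (M : lmodType A) : is_linear_map (@id M).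
Proof. by []. Qed.

Lemma linmap_zero (A : nzRingType) (M N : lmodType A) :
  is_linear_map (fun _ : M => 0 : N).
Proof. by move=> a x y; rewrite scaler0 addr0. Qed.

Lemma linmap_add (A : nzRingType) (M N : lmodType A) (f g : M -> N) :
  is_linear_map f -> is_linear_map g -> is_linear_map (fun x => f x + g x).
Proof. by move=> f_lin g_lin a x y; rewrite f_lin g_lin scalerDr addrACA. Qed.

Lemma linmap_comp (A : nzRingType) (M N O : lmodType A) (f : M -> N) (g : N -> O) :
  is_linear_map f -> is_linear_map g -> is_linear_map (g \o f).
Proof. by move=> f_lin g_lin a x y /=; rewrite f_lin g_lin. Qed.

Lemma linmap_iter (A : nzRingType) (M : lmodType A) (h : M -> M) n :
  is_linear_map h -> is_linear_map (iter n h).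
Proof. by move=> h_lin; elim: n => [|n IH] // a x y; rewrite !iterS IH h_lin. Qed.

Section SubmoduleType.
Variables (A : nzRingType) (V : lmodType A) (S : set V) (S_sub : is_submodule S).

(* The unused argument makes the carrier depend on [S_sub], which the
   canonical lmodType instance below needs. *)
Definition submod_pred of is_submodule S : {pred V} := fun x => `[< S x >].

Record submod := Submod { submod_val : V; _ : submod_pred S_sub submod_val }.

HB.instance Definition _ := [isSub for submod_val].
HB.instance Definition _ := [Choice of submod by <:].

Lemma submod_pred_closed : subsemimod_closed (submod_pred S_sub).
Proof.
case: S_sub => S0 SD SZ; split; first split.
- exact/asboolP.
- by move=> x y /asboolP Sx /asboolP Sy; apply/asboolP; apply: SD.
- by move=> a x /asboolP Sx; apply/asboolP; apply: SZ.
Qed.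

HB.instance Definition _ :=
  GRing.isSubmodClosed.Build A V (submod_pred S_sub) submod_pred_closed.
HB.instance Definition _ := [SubChoice_isSubLmodule of submod by <:].

Lemma submod_valP (x : submod) : S (submod_val x).
Proof. by case: x => v Sv; apply/asboolP. Qed.

Definition submod_of x (Sx : S x) : submod :=
  Submod (asboolT Sx : submod_pred S_sub x).

End SubmoduleType.

Lemma injective_projection (A : nzRingType) (E : lmodType A) (C D : set E) :
  injective_module E -> is_submodule C -> is_submodule D -> C `&` D `<=` [set 0] ->
  exists h : E -> E,
    [/\ is_linear_map h, forall c, C c -> h c = c & forall d, D d -> h d = 0].
Proof.
move=> Einj C_sub D_sub CD0.
pose i (p : submod C_sub * submod D_sub) := submod_val p.1 + submod_val p.2.
pose g (p : submod C_sub * submod D_sub) := submod_val p.1.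
have i_lin : is_linear_map i.
  by move=> a p q; rewrite /i /= scalerDr addrACA.
have i_inj : injective i.
  apply: linmap_inj => // -[c d]; rewrite /i /= => /eqP; rewrite addr_eq0 => /eqP cNd.
  have c0 : submod_val c = 0.
    apply: CD0; split; first exact: submod_valP.
    by rewrite cNd; apply: (submodN D_sub); apply: submod_valP.
  have d0 : submod_val d = 0 by apply/eqP; rewrite -oppr_eq0 -cNd c0.
  by congr pair; apply: val_inj; rewrite /= ?c0 ?d0.
have [h [h_lin hi]] := Einj _ _ i g i_lin i_inj (fun _ _ _ => erefl).
exists h; split => // [c Cc|d Dd].
- have := hi (submod_of C_sub Cc, submod_of D_sub (submod0 D_sub)).
  by rewrite /i /g /= addr0.
- have := hi (submod_of C_sub (submod0 C_sub), submod_of D_sub Dd).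
  by rewrite /i /g /= add0r.
Qed.

Lemma zorn_above T (P : set (set T)) (X0 : set T) : P X0 ->
  (forall F, F `<=` P -> F !=set0 -> total_on F subset -> P (\bigcup_(X in F) X)) ->
  exists2 M, X0 `<=` M & P M /\ forall Y, P Y -> M `<=` Y -> Y `<=` M.
Proof.
move=> PX0 Pchain.
pose Above (X : set T) := P X /\ X0 `<=` X.
pose le (X Y : sig Above) := `[< sval X `<=` sval Y >].
have t0 : sig Above by exists X0; split.
have [||F Ftot|[M [PM X0M]] Mmax] := @ZL_preorder (sig Above) t0 le.
- by move=> X; apply/asboolP.
- by move=> X Y Z /asboolP XY /asboolP YZ; apply/asboolP; apply: subset_trans YZ.
- have [[X FX]|F0] := pselect (exists X, F X); last first.
    by exists t0 => X FX; case: F0; exists X.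
  pose G := [set sval Y | Y in F].
  have PG : P (\bigcup_(Y in G) Y).
    apply: Pchain; first by move=> _ [Y _ <-]; case: (svalP Y).
      by exists (sval X), X.
    move=> _ _ [Y FY <-] [Z FZ <-].
    by case: (Ftot Y Z FY FZ) => /asboolP; [left|right].
  have X0G : X0 `<=` \bigcup_(Y in G) Y.
    by move=> x X0x; exists (sval X); [exists X|case: (svalP X) => _; apply].
  exists (exist Above _ (conj PG X0G)) => Y FY; apply/asboolP => y Yy.
  by exists (sval Y) => //; exists Y.
- exists M => //; split => // Y PY MY.
  have X0Y : X0 `<=` Y by apply: subset_trans MY.
  by apply/asboolP; apply: (Mmax (exist Above Y (conj PY X0Y))); apply/asboolP.
Qed.

Definition maximal_disjoint (A : nzRingType) (E : lmodType A) (W M : set E) :=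
  [/\ is_submodule M, M `&` W `<=` [set 0] &
      forall Y, is_submodule Y -> Y `&` W `<=` [set 0] -> M `<=` Y -> Y `<=` M].

Lemma maximal_disjoint_submodule (A : nzRingType) (E : lmodType A) (W X0 : set E) :
  is_submodule X0 -> X0 `&` W `<=` [set 0] -> exists2 M, maximal_disjoint W M & X0 `<=` M.
Proof.
move=> X0_sub X0W.
pose P (X : set E) := is_submodule X /\ X `&` W `<=` [set 0].
have [|M X0M [[M_sub MW] Mmax]] := @zorn_above E P X0 (conj X0_sub X0W).
  move=> F FP [X FX] Ftot; split; last first.
    by move=> x [[Y FY Yx] Wx]; apply: (proj2 (FP Y FY)).
  split; first by exists X => //; exact: submod0 (proj1 (FP X FX)).
  - move=> x y [X1 FX1 X1x] [X2 FX2 X2y].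
    have [X12|X21] := Ftot X1 X2 FX1 FX2.
    + by exists X2 => //; apply: (submodD (proj1 (FP X2 FX2))) => //; apply: X12.
    + by exists X1 => //; apply: (submodD (proj1 (FP X1 FX1))) => //; apply: X21.
  - by move=> a x [X1 FX1 X1x]; exists X1 => //; apply: (submodZ (proj1 (FP X1 FX1))).
by exists M => //; split => // Y Y_sub YW; apply: Mmax.
Qed.

Lemma projection_range_disjoint (A : nzRingType) (E : lmodType A) (C D V : set E)
    (h : E -> E) :
  is_submodule V -> is_linear_map h -> C `&` V `<=` [set 0] -> maximal_disjoint C D ->
  (forall c, C c -> h c = c) -> (forall d, D d -> h d = 0) ->
  range h `&` V `<=` [set 0].
Proof.
move=> V_sub h_lin CV0 [D_sub _ Dmax] hC hD _ [[y _ <-] Vhy].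
(* Either D + Ay meets C trivially, so y lies in D by maximality, or it meets C
   in some w = d + a y = h w = a (h y), which then lies in C and V. *)
pose Dy w := exists d a, D d /\ w = d + a *: y.
have Dy_sub : is_submodule Dy.
  split; first by exists 0, 0; rewrite scale0r addr0; split => //; apply: submod0.
  - move=> _ _ [d1 [a1 [Dd1 ->]]] [d2 [a2 [Dd2 ->]]]; exists (d1 + d2), (a1 + a2).
    by rewrite scalerDl addrACA; split => //; apply: submodD.
  - move=> b _ [d [a [Dd ->]]]; exists (b *: d), (b * a).
    by rewrite scalerDr scalerA; split => //; apply: submodZ.
have DDy : D `<=` Dy by move=> d Dd; exists d, 0; rewrite scale0r addr0.
have [DyC0|] := pselect (Dy `&` C `<=` [set 0]).
  rewrite hD //; apply: (Dmax Dy Dy_sub DyC0 DDy).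
  by exists 0, 1; rewrite scale1r add0r; split => //; apply: submod0.
move=> /existsNP[w /not_implyP[[[d [a [Dd ->]]] Cw] w0]]; exfalso; apply: w0.
apply: CV0; split => //.
by rewrite -(hC _ Cw) linmapD // linmapZ // hD // add0r; apply: submodZ.
Qed.

Definition uniform_module (A : nzRingType) (M : lmodType A) :=
  forall U V : set M, is_submodule U -> is_submodule V ->
    U `&` V `<=` [set 0] -> U `<=` [set 0] \/ V `<=` [set 0].

Lemma indecomposable_injective_uniform (A : nzRingType) (E : lmodType A) :
  indecomposable_injective E -> uniform_module E.
Proof.
move=> [Einj _ Eind] U V U_sub V_sub UV0.
have [C Cmax UC] := maximal_disjoint_submodule U_sub UV0.
have [C_sub CV0 _] := Cmax.
have [D Dmax VD] : exists2 D, maximal_disjoint C D & V `<=` D.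
  by apply: maximal_disjoint_submodule => // x [Vx Cx]; apply: CV0.
have [D_sub DC0 Dmax'] := Dmax.
have CD0 : C `&` D `<=` [set 0] by move=> x [Cx Dx]; apply: DC0.
have [h [h_lin hC hD]] := injective_projection Einj C_sub D_sub CD0.
have rangeC : range h `<=` C.
  case: Cmax => _ _; apply; first exact: image_submodule.
    exact: projection_range_disjoint Dmax hC hD.
  by move=> c Cc; exists c => //; apply: hC.
have kerD : (fun x => h x = 0) `<=` D.
  apply: Dmax' (kernel_submodule h_lin) _ hD.
  by move=> x [hx Cx]; rewrite -(hC x Cx).
have CD_span z : exists u v, [/\ C u, D v & z = u + v].
  have Chz : C (h z) by apply: rangeC; exists z.
  exists (h z), (z - h z); split => //; last by rewrite addrC subrK.
  by apply: kerD; rewrite linmapB // (hC (h z)) ?subrr.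
have [C0|D0] := Eind C D C_sub D_sub (fun x Cx Dx => CD0 x (conj Cx Dx)) CD_span.
- by left => x /UC /C0.
- by right => x /VD /D0.
Qed.

Lemma inj_endo_bijective (A : nzRingType) (E : lmodType A) (s : E -> E) :
  indecomposable_injective E -> is_linear_map s -> injective s ->
  exists h : E -> E, [/\ is_linear_map h, cancel s h & cancel h s].
Proof.
move=> [Einj [x0 x0n] Eind] s_lin s_inj.
have [h [h_lin sK]] := Einj E E s id s_lin s_inj (@linmap_id _ E).
exists h; split => // z.
(* E is the direct sum of the range of s \o h and the kernel of h. *)
pose U v := s (h v) = v.
have U_sub : is_submodule U by apply: fixed_submodule; apply: linmap_comp.
have hB y : h (y - s (h y)) = 0 by rewrite linmapB // sK subrr.
case: (Eind U _ U_sub (kernel_submodule h_lin)).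
- by move=> y Uy hy; rewrite -Uy hy linmap0.
- move=> y; exists (s (h y)), (y - s (h y)).
  by split; [rewrite /U sK|exact: hB|rewrite addrC subrK].
- move=> U0; have /U0 : U (s x0) by rewrite /U sK.
  by rewrite -(linmap0 s_lin) => /s_inj x00; rewrite x00 eqxx in x0n.
- by move=> /(_ _ (hB z)) /eqP; rewrite subr_eq0 => /eqP.
Qed.

Definition ascending T (c : nat -> set T) := forall n, c n `<=` c n.+1.

Definition stabilizes T (c : nat -> set T) :=
  exists N, forall n, (N <= n)%N -> c n `<=` c N.

Lemma ascending_le T (c : nat -> set T) :
  ascending c -> forall n m, (n <= m)%N -> c n `<=` c m.
Proof.
move=> c_asc n m /subnKC <-; elim: (m - n)%N => [|d IH]; first by rewrite addn0.
by rewrite addnS; apply: subset_trans IH (c_asc _).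
Qed.

Section FiniteAlgebraACC.
Variables (R : comNzRingType) (A : nzRingType) (phi : {rmorphism R -> A}).

Definition is_Rsubmodule (L : set A) :=
  [/\ L 0, forall x y, L x -> L y -> L (x + y) & forall r x, L x -> L (phi r * x)].

Lemma RsubmoduleB L x y : is_Rsubmodule L -> L x -> L y -> L (x - y).
Proof.
case=> _ LD LZ Lx Ly; apply: LD => //.
by rewrite -mulN1r -(rmorphN1 phi); apply: LZ.
Qed.

Lemma RsubmoduleI L L' : is_Rsubmodule L -> is_Rsubmodule L' -> is_Rsubmodule (L `&` L').
Proof.
case=> L0 LD LZ [L'0 L'D L'Z]; split => //.
- by move=> x y [Lx L'x] [Ly L'y]; split; [apply: LD|apply: L'D].
- by move=> r x [Lx L'x]; split; [apply: LZ|apply: L'Z].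
Qed.

Fixpoint span_prefix (s : seq A) k : set A :=
  if k is k'.+1 then fun a => exists r w, span_prefix s k' w /\ a = phi r * s`_k' + w
  else [set 0].

Lemma span_prefix_Rsubmodule s k : is_Rsubmodule (span_prefix s k).
Proof.
elim: k => [|k [S0 SD SZ]] /=.
  by split => [//|x y -> ->|r x ->]; rewrite ?addr0 ?mulr0.
split.
- by exists 0, 0; rewrite rmorph0 mul0r addr0.
- move=> _ _ [r1 [w1 [Sw1 ->]]] [r2 [w2 [Sw2 ->]]]; exists (r1 + r2), (w1 + w2).
  by rewrite rmorphD mulrDl addrACA; split => //; apply: SD.
- move=> r _ [r1 [w1 [Sw1 ->]]]; exists (r * r1), (phi r * w1).
  by rewrite mulrDr rmorphM mulrA; split => //; apply: SZ.
Qed.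

Lemma span_prefix_sum s k (c : seq R) : span_prefix s k (\sum_(i < k) phi c`_i * s`_i).
Proof.
elim: k => [|k IH]; first by rewrite big_ord0.
by rewrite big_ord_recr /= addrC; exists c`_k, (\sum_(i < k) phi c`_i * s`_i).
Qed.

Definition coef_ideal s k (L : set A) : set R :=
  fun r => exists2 w, span_prefix s k w & L (phi r * s`_k + w).

Lemma coef_ideal_is_ideal s k L : is_Rsubmodule L -> is_ideal (coef_ideal s k L).
Proof.
case=> L0 LD LZ; have [S0 SD SZ] := span_prefix_Rsubmodule s k.
have coefZ a x : coef_ideal s k L x -> coef_ideal s k L (a * x).
  case=> w Sw Lw; exists (phi a * w); first exact: SZ.
  by rewrite rmorphM -mulrA -mulrDr; apply: LZ.
split => //.
- by exists 0; rewrite // rmorph0 mul0r addr0.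
- move=> x y [w1 Sw1 Lw1] [w2 Sw2 Lw2]; exists (w1 + w2); first exact: SD.
  by rewrite rmorphD mulrDl addrACA; apply: LD.
- by move=> a x /(coefZ a); rewrite mulrC.
Qed.

Lemma stabilizes_by_coef_ideal s k (L : nat -> set A) :
  (forall m, is_Rsubmodule (L m)) -> ascending L ->
  (forall m, L m `<=` span_prefix s k.+1) ->
  stabilizes (fun m => coef_ideal s k (L m)) ->
  stabilizes (fun m => span_prefix s k `&` L m) -> stabilizes L.
Proof.
move=> L_sub L_asc Lspan [N1 HN1] [N2 HN2]; exists (maxn N1 N2) => m Hm x Lx.
have L_le := ascending_le L_asc.
have N1m := leq_trans (leq_maxl N1 N2) Hm; have N2m := leq_trans (leq_maxr N1 N2) Hm.
have [r [w [Sw Ex]]] := Lspan m x Lx.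
have [|w' Sw' Lw'] := HN1 m N1m r; first by exists w; rewrite -?Ex.
have [|_ Ld] := HN2 m N2m (w - w').
  split; first exact: RsubmoduleB (span_prefix_Rsubmodule s k) _ _.
  have -> : w - w' = x - (phi r * s`_k + w') by rewrite Ex opprD addrACA subrr add0r.
  exact: RsubmoduleB (L_le _ _ N1m _ Lw').
have -> : x = (phi r * s`_k + w') + (w - w') by rewrite Ex addrACA subrr addr0.
have [_ LD _] := L_sub (maxn N1 N2); apply: LD.
- exact: L_le _ _ (leq_maxl _ _) _ Lw'.
- exact: L_le _ _ (leq_maxr _ _) _ Ld.
Qed.

Hypothesis R_noeth : noetherian_ring R.

Lemma span_prefix_ACC s k (L : nat -> set A) :
  (forall m, is_Rsubmodule (L m)) -> ascending L ->
  (forall m, L m `<=` span_prefix s k) -> stabilizes L.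
Proof.
elim: k L => [|k IH] L L_sub L_asc Lspan.
  by exists 0%N => m _ x /Lspan ->; case: (L_sub 0%N).
apply: (stabilizes_by_coef_ideal L_sub L_asc Lspan).
- apply: R_noeth => [m|m r [w Sw Lw]]; first exact: coef_ideal_is_ideal.
  by exists w => //; apply: L_asc.
- apply: IH => [m|m x [Sx Lx]|m x []] //; last by split => //; apply: L_asc.
  exact: RsubmoduleI (span_prefix_Rsubmodule s k) (L_sub m).
Qed.

Lemma finite_algebra_ACC (L : nat -> set A) : finite_algebra phi ->
  (forall m, is_Rsubmodule (L m)) -> ascending L -> stabilizes L.
Proof.
case=> _ _ [s Hs] L_sub L_asc; apply: (span_prefix_ACC (k := size s) L_sub L_asc).
by move=> m x _; have [c ->] := Hs x; apply: span_prefix_sum.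
Qed.

End FiniteAlgebraACC.

Definition End_span (A : nzRingType) (I J : lmodType A) (g : I -> J) : set (I -> J) :=
  fun k => is_linear_map k /\
    exists2 e : J -> J, is_linear_map e & forall x, k x = e (g x).

Lemma End_span_submodule (A : nzRingType) (I J : lmodType A) (g : I -> J) :
  is_End_submodule (End_span g).
Proof.
split; first by move=> k [].
- by split; [exact: linmap_zero|exists (fun _ => 0); first exact: linmap_zero].
- move=> k1 k2 [k1_lin [e1 e1_lin E1]] [k2_lin [e2 e2_lin E2]].
  split; first exact: linmap_add.
  by exists (fun z => e1 z + e2 z); [exact: linmap_add|move=> x; rewrite E1 E2].
- move=> e k e_lin [k_lin [e1 e1_lin E1]]; split; first exact: (linmap_comp k_lin e_lin).
  by exists (e \o e1); [exact: linmap_comp|move=> x /=; rewrite E1].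
Qed.

Lemma End_span_gen (A : nzRingType) (I J : lmodType A) (g : I -> J) :
  is_linear_map g -> End_span g g.
Proof. by move=> g_lin; split => //; exists id. Qed.

Lemma End_span_le (A : nzRingType) (I J : lmodType A) (g g' : I -> J) (e : J -> J) :
  is_linear_map e -> (forall x, g x = e (g' x)) -> End_span g `<=` End_span g'.
Proof.
move=> e_lin Eg k [k_lin [e1 e1_lin E1]]; split => //.
by exists (e1 \o e); [exact: linmap_comp|move=> x /=; rewrite E1 Eg].
Qed.

Section FiniteAlgebraModules.
Variables (R : comNzRingType) (A : nzRingType) (phi : {rmorphism R -> A}).
Hypotheses (R_noeth : noetherian_ring R) (fa : finite_algebra phi).

Lemma phi_central r a : phi r * a = a * phi r.
Proof. by case: fa. Qed.

Lemma linmap_scale_phi (M : lmodType A) r : is_linear_map (fun x : M => phi r *: x).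
Proof. by move=> a x y; rewrite scalerDr !scalerA phi_central. Qed.

Lemma hull_power_scale_ker P (I : lmodType A) r :
  is_prime_ideal P -> hull_is_power P I -> P (phi r) ->
  exists2 y : I, y <> 0 & phi r *: y = 0.
Proof.
move=> [_ P1 _] [n [_ [x [annx _]]]] Pr.
have rx : phi r *: x = 0 by apply/annx.
have [i xi] : exists i, x i <> 0.
  apply/existsNP => x0; apply: P1; apply/annx.
  by rewrite scale1r; apply/ffunP => i; rewrite x0 ffunE.
by exists (x i) => //; move/ffunP: rx => /(_ i); rewrite !ffunE.
Qed.

Lemma hull_power_scale_ker0 P (I : lmodType A) r :
  is_prime_ideal P -> hull_is_power P I -> ~ P (phi r) ->
  forall y : I, phi r *: y = 0 -> y = 0.
Proof.
move=> [[_ _ PL _] P1 P_prime] [n [_ [x [annx ess]]]] Pr y ry.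
apply: contrapT => y0.
case: n => [|n] in x annx ess *.
  by apply: P1; apply/annx; rewrite scale1r; apply/ffunP => -[].
have Yker : exists Y : {ffun 'I_n.+1 -> I}, phi r *: Y = 0 /\ Y <> 0.
  exists [ffun=> y]; split; first by apply/ffunP => i; rewrite !ffunE ry.
  by move=> /ffunP /(_ ord0); rewrite !ffunE.
have [z [rz z0 [a Ez]]] := ess _ (kernel_submodule (linmap_scale_phi r)) Yker.
have Pra : P (phi r * a) by apply/annx; rewrite -scalerA -Ez.
have [t|//|/annx] := P_prime (phi r) a; last by rewrite -Ez.
by rewrite phi_central -mulrA; apply: PL.
Qed.

Lemma scale_locally_nilpotent (I : lmodType A) r :
  uniform_module I -> (exists2 y0 : I, y0 <> 0 & phi r *: y0 = 0) ->
  forall y : I, exists N, phi r ^+ N *: y = 0.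
Proof.
move=> Iu [y0 y0n ry0] y.
have phiXC n a : phi r ^+ n * a = a * phi r ^+ n by rewrite -rmorphXn phi_central.
(* Once the annihilators L m of r^m y stabilize at N, A r^N y meets the kernel
   of r trivially. *)
pose L m : set A := fun a => (phi r ^+ m * a) *: y = 0.
have L_sub m : is_Rsubmodule phi (L m).
  split; rewrite /L.
  - by rewrite mulr0 scale0r.
  - by move=> a b La Lb; rewrite mulrDr scalerDl La Lb addr0.
  - by move=> t a La; rewrite mulrA phiXC -mulrA -scalerA La scaler0.
have L_asc : ascending L by move=> m a La; rewrite /L exprS -mulrA -scalerA La scaler0.
have [N HN] := finite_algebra_ACC R_noeth fa L_sub L_asc; exists N.
pose X := range (fun a : A => (phi r ^+ N * a) *: y).
have X_sub : is_submodule X.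
  split; first by exists 0; rewrite // mulr0 scale0r.
  - by move=> _ _ [a _ <-] [b _ <-]; exists (a + b); rewrite // mulrDr scalerDl.
  - by move=> b _ [a _ <-]; exists (b * a); rewrite // scalerA mulrA phiXC -mulrA.
have Xker0 : X `&` (fun z => phi r *: z = 0) `<=` [set 0].
  move=> _ [[a _ <-] raN]; apply: (HN N.+1) => //.
  by rewrite /L exprS -mulrA -scalerA.
have [X0|ker0] := Iu _ _ X_sub (kernel_submodule (linmap_scale_phi (M := I) r)) Xker0.
- by apply: X0; exists 1; rewrite // mulr1.
- by case: y0n; apply: ker0.
Qed.

Lemma hom_vanishes (I J : lmodType A) r (f : I -> J) :
  uniform_module I -> (exists2 y0 : I, y0 <> 0 & phi r *: y0 = 0) ->
  (forall y : J, phi r *: y = 0 -> y = 0) -> is_linear_map f -> forall x, f x = 0.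
Proof.
move=> Iu Itors Jker0 f_lin x.
have [N rNx] := scale_locally_nilpotent Iu Itors x.
have : phi r ^+ N *: f x = 0 by rewrite -linmapZ // rNx linmap0.
elim: {rNx} N (f x) => [|N IH] y; first by rewrite expr0 scale1r.
by rewrite exprS -scalerA => /Jker0 /IH.
Qed.

Lemma not_Hom_noetherian_of_scale_automorphism (I J : lmodType A) r (h : I -> I)
    (f : I -> J) :
  is_linear_map h -> cancel (fun x => phi r *: x) h -> cancel h (fun x => phi r *: x) ->
  uniform_module J -> (exists2 y0 : J, y0 <> 0 & phi r *: y0 = 0) ->
  is_linear_map f -> (exists x, f x <> 0) -> ~ Hom_noetherian_over_End I J.
Proof.
move=> h_lin sK hK Ju [y0 y0n ry0] f_lin [x fx0] Hom_noeth.
pose g n x' := f (iter n h x').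
have g_lin n : is_linear_map (g n) by apply: linmap_comp f_lin; apply: linmap_iter.
have gS n x' : g n x' = phi r *: g n.+1 x' by rewrite /g iterS -(linmapZ f_lin) hK.
have g_nz n : exists x', g n x' <> 0.
  elim: n => [|n [y gy]]; first by exists x.
  by exists (phi r *: y); rewrite /g iterSr sK.
have span_asc n : End_span (g n) `<=` End_span (g n.+1).
  exact: End_span_le (linmap_scale_phi (M := J) r) (gS n).
have [N HN] := Hom_noeth _ (fun n => End_span_submodule (g n)) span_asc.
have [_ [e e_lin Ee]] := HN N.+1 (leqnSn N) _ (End_span_gen (g_lin N.+1)).
pose k := e \o (fun z => phi r *: z).
have k_lin : is_linear_map k := linmap_comp (linmap_scale_phi (M := J) r) e_lin.
have fix_ker0 : (fun z => k z = z) `&` (fun z => k z = 0) `<=` [set 0].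
  by move=> z [kz kz0]; rewrite -kz kz0.
have [fix0|ker0] := Ju _ _ (fixed_submodule k_lin) (kernel_submodule k_lin) fix_ker0.
- have [y gy] := g_nz N.+1; apply: gy; apply: fix0.
  by rewrite /k /= -gS -Ee.
- by apply: y0n; apply: ker0; rewrite /k /= ry0 linmap0.
Qed.

End FiniteAlgebraModules.

Unset Implicit Arguments.

Theorem lemma3p14 (R : comNzRingType) (A : nzRingType) (phi : {rmorphism R -> A})
  (I J : lmodType A) (P Q : A -> Prop) :
  noetherian_ring R -> finite_algebra phi ->
  indecomposable_injective I -> indecomposable_injective J ->
  is_prime_ideal P -> hull_is_power P I ->
  is_prime_ideal Q -> hull_is_power Q J ->
  (exists f : I -> J, is_linear_map f /\ exists x, f x <> 0) ->
  ~ (forall r : R, P (phi r) <-> Q (phi r)) ->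
  ~ Hom_noetherian_over_End I J.
Proof.
move=> R_noeth fa Iii Jii P_prime hullP Q_prime hullQ [f [f_lin [x fx0]]] PQ.
have [r PQr] : exists r, ~ (P (phi r) <-> Q (phi r)) by apply/existsNP.
have Iu := indecomposable_injective_uniform Iii.
have Ju := indecomposable_injective_uniform Jii.
have [Pr|Pr] := pselect (P (phi r)); have [Qr|Qr] := pselect (Q (phi r)); try tauto.
- have Itors := hull_power_scale_ker P_prime hullP Pr.
  have Jker0 := hull_power_scale_ker0 fa Q_prime hullQ Qr.
  by case: fx0; apply: (hom_vanishes R_noeth fa Iu Itors Jker0 f_lin).
- have s_lin := linmap_scale_phi fa (M := I) r.
  have s_inj := linmap_inj s_lin (hull_power_scale_ker0 fa P_prime hullP Pr).
  have [h [h_lin sK hK]] := inj_endo_bijective Iii s_lin s_inj.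
  have Jtors := hull_power_scale_ker Q_prime hullQ Qr.
  exact: (not_Hom_noetherian_of_scale_automorphism fa h_lin sK hK Ju Jtors f_lin
            (ex_intro _ x fx0)).
Qed.
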